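(* Let $p$ be a prime and $c_1,\dots,c_n$ distinct nonzero integers. Let $M(c_1,\dots,c_n)$ be the $n\times n$ matrix whose $(k,i)$ entry is $c_i^{p^{k-1}}$ ($k,i=1,\dots,n$). Then the columns of $M(c_1,\dots,c_n)$ are $\mathbb Z$-linearly independent in each of the following cases: (1) all $c_i$ are positive; (2) $p\neq2$ and the $|c_i|$ are distinct, i.e. $c_i\ne -c_j$ for all $i\ne j$. *)

From mathcomp Require Import all_boot all_order all_algebra.
Set Implicit Arguments. Unset Strict Implicit. Unset Printing Implicit Defensive.
Import GRing.Theory Num.Theory.
Local Open Scope ring_scope.

(* M(c_1,...,c_n): entry in row k, column i (0-indexed) is c_i ^ (p ^ k),
   i.e. the paper's (k,i) entry c_i^{p^{k-1}} with 1-indexing. *)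
Definition Mfrob (p n : nat) (c : 'I_n -> int) : 'M[int]_n :=
  \matrix_(k < n, i < n) c i ^+ (p ^ k)%N.

Definition cols_Z_indep (n : nat) (A : 'M[int]_n) : Prop :=
  forall a : 'cV[int]_n, A *m a = 0 -> a = 0.

From mathcomp Require Import all_boot all_order all_algebra.
From mathcomp Require Import polyrcf realalg.

(* If the square matrix M(c) were singular, a nonzero row vector v with
   v M(c) = 0 would give the lacunary polynomial q = sum_k v_k X^(p^k), which
   has at most n nonzero coefficients and vanishes at every c_i.  By the weak
   Descartes rule of signs, a nonzero real polynomial with m nonzero
   coefficients has fewer than m positive roots: either X divides q and can be
   cancelled, or q(0) <> 0 and then, by Rolle, q' has a root between any two
   consecutive positive roots of q and one nonzero coefficient fewer.  Hence
   the c_i cannot be n distinct positive numbers.  When p is odd every p^k is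
   odd, so replacing each c_i by |c_i| only multiplies the columns by signs. *)

Set Implicit Arguments. Unset Strict Implicit. Unset Printing Implicit Defensive.
Import Order.TTheory GRing.Theory Num.Theory.
Local Open Scope ring_scope.

Definition count_nzcoef (R : nzSemiRingType) (q : {poly R}) : nat :=
  count (fun i => q`_i != 0) (iota 0 (size q)).

Section NonzeroCoefficients.
Variable R : nzSemiRingType.
Implicit Types (q : {poly R}).

Lemma count_nzcoef_iota q N :
  (size q <= N)%N -> count_nzcoef q = count (fun i => q`_i != 0) (iota 0 N).
Proof.
move=> qN; rewrite /count_nzcoef -(subnKC qN) iotaD count_cat add0n.
rewrite (@eq_in_count _ _ pred0 (iota (size q) _)) ?count_pred0 ?addn0 //.
by move=> i; rewrite mem_iota => /andP[qi _] /=; rewrite nth_default ?eqxx.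
Qed.

Lemma count_nzcoef_gt0 q : q != 0 -> (0 < count_nzcoef q)%N.
Proof.
move=> q0; rewrite /count_nzcoef -has_count; apply/hasP; exists (size q).-1.
  by rewrite mem_iota add0n prednK ?leqnn // size_poly_gt0.
by rewrite -lead_coefE lead_coef_eq0.
Qed.

Lemma count_nzcoef_mulX q : count_nzcoef (q * 'X) = count_nzcoef q.
Proof.
have [->|q0] := eqVneq q 0; first by rewrite mul0r.
rewrite /count_nzcoef size_mulX // -add1n iotaD count_cat /= coefMX /= eqxx.
rewrite (iotaDl 1) count_map addn0 add0n.
by apply: eq_count => i; rewrite /= coefMX.
Qed.

Lemma coef_sum_monomials n (a : 'I_n -> R) (e : 'I_n -> nat) k :
  injective e -> (\sum_(l < n) a l *: 'X^(e l))`_(e k) = a k.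
Proof.
move=> e_inj; rewrite coef_sum (bigD1 k) //= coefZ coefXn eqxx mulr1.
rewrite big1 ?addr0 // => l lk; rewrite coefZ coefXn (inj_eq e_inj).
by rewrite eq_sym (negPf lk) mulr0.
Qed.

Lemma count_nzcoef_sum_monomials n (a : 'I_n -> R) (e : 'I_n -> nat) :
  (count_nzcoef (\sum_(k < n) a k *: 'X^(e k)) <= n)%N.
Proof.
rewrite /count_nzcoef -size_filter.
apply: (@leq_trans (size (map e (enum 'I_n)))); last by rewrite size_map size_enum_ord.
apply: uniq_leq_size => [|j]; first by rewrite filter_uniq ?iota_uniq.
rewrite mem_filter => /andP[qj _]; apply/mapP.
have [k /eqP ->|no_k] := pickP (fun k : 'I_n => j == e k).
  by exists k; rewrite ?mem_enum.
case/negP: qj; rewrite coef_sum big1 // => k _.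
by rewrite coefZ coefXn no_k mulr0.
Qed.

End NonzeroCoefficients.

Lemma count_nzcoef_deriv (R : numDomainType) (q : {poly R}) :
  q`_0 != 0 -> count_nzcoef q = (count_nzcoef q^`()).+1.
Proof.
move=> q00; have q0 : q != 0 by apply: contra_neq q00 => ->; rewrite coef0.
have size_q : size q = (size q).-1.+1 by rewrite prednK // size_poly_gt0.
have size_q' : (size q^`() <= (size q).-1)%N by rewrite -ltnS -size_q lt_size_deriv.
rewrite (count_nzcoef_iota size_q') {1}/count_nzcoef size_q /= q00 add1n.
rewrite (iotaDl 1) count_map; congr _.+1.
by apply: eq_count => i; rewrite /= coef_deriv mulrn_eq0.
Qed.

Lemma deriv_neq0 (R : realDomainType) (q : {poly R}) x :
  q`_0 != 0 -> root q x -> q^`() != 0.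
Proof.
move=> q00 qx; apply/eqP => q'0.
have /size1_polyC q_const : (size q <= 1)%N.
  by move: (polyorder.size_deriv q); rewrite q'0 size_poly0; case: (size q) => [|[]].
by move: qx; rewrite q_const rootC (negPf q00).
Qed.

Section Descartes.
Variable R : rcfType.
Implicit Types (q : {poly R}) (rs : seq R).

Lemma poly_rolle_sorted q x s :
  path <%R x s -> all (root q) (x :: s) ->
  exists ts, [/\ size ts = size s, sorted <%R ts, all (> x) ts
             & all (root q^`()) ts].
Proof.
elim: s x => [|y s IHs] x /=; first by exists [::].
move=> /andP[xy ys] /and3P[qx qy qs].
have [ts [size_ts sorted_ts ts_gt_y ts_roots]] := IHs y ys (introT andP (conj qy qs)).
have [t] := poly_rolle xy (etrans (eqP qx) (esym (eqP qy))).
rewrite in_itv /= => /andP[xt ty] q't.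
have ts_gt_t : all (> t) ts.
  by apply/allP => u /(allP ts_gt_y); apply: lt_trans.
exists (t :: ts); split => /=; first by rewrite size_ts.
- by rewrite path_sortedE ?sorted_ts ?ts_gt_t //; apply: lt_trans.
- by rewrite xt; apply/allP => u /(allP ts_gt_t); apply: lt_trans.
- by rewrite /root q't eqxx.
Qed.

Lemma descartes_bound_sorted q rs :
  q != 0 -> sorted <%R rs -> all (> 0) rs -> all (root q) rs ->
  (size rs < count_nzcoef q)%N.
Proof.
move: {2}(size q).+1 (ltnSn (size q)) => N.
elim: N q rs => [|N IHN] q [|x s] //; rewrite ltnS => size_q q0.
  by move=> *; apply: count_nzcoef_gt0.
move=> sorted_xs pos_xs roots_xs; have x_gt0 : 0 < x by case/andP: pos_xs.
have [q00|q00] := eqVneq q`_0 0.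
  have /factor_theorem[r q_eq] : root q 0 by rewrite /root horner_coef0 q00.
  move: q_eq q0 size_q roots_xs; rewrite polyC0 subr0 => -> rX0.
  have r0 : r != 0 by apply: contra_neq rX0 => ->; rewrite mul0r.
  rewrite count_nzcoef_mulX size_mulX // => size_r roots_rX.
  apply: IHN => //; apply/allP => y xs_y.
  have := allP roots_rX y xs_y; rewrite rootM rootX => /orP[//|/eqP y0].
  by have := allP pos_xs y xs_y; rewrite y0 ltxx.
have [ts [size_ts sorted_ts ts_gt_x roots_ts]] := poly_rolle_sorted sorted_xs roots_xs.
have q'0 : q^`() != 0 by case/andP: roots_xs => /(deriv_neq0 q00).
rewrite (count_nzcoef_deriv q00) /= ltnS -size_ts; apply: IHN => //.
- exact: leq_trans (lt_size_deriv q0) size_q.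
- by apply/allP => t /(allP ts_gt_x); apply: lt_trans.
Qed.

Lemma descartes_bound q rs :
  q != 0 -> uniq rs -> all (> 0) rs -> all (root q) rs ->
  (size rs < count_nzcoef q)%N.
Proof.
move=> q0 rs_uniq pos_rs roots_rs; rewrite -(size_sort <=%R).
apply: descartes_bound_sorted; rewrite ?sort_lt_sorted //.
  by apply/allP => x; rewrite mem_sort => /(allP pos_rs).
by apply/allP => x; rewrite mem_sort => /(allP roots_rs).
Qed.

End Descartes.

Lemma Mfrob_det_neq0_pos (p n : nat) (c : 'I_n -> int) :
  (1 < p)%N -> (forall i, 0 < c i) -> injective c -> \det (Mfrob p c) != 0.
Proof.
move=> p_gt1 c_pos c_inj; apply/negP => /det0P[v v0 vM0].
pose q : {poly realalg} := \sum_(k < n) (v 0 k)%:~R *: 'X^(p ^ k).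
have q0 : q != 0.
  have [k vk0] : exists k, v 0 k != 0.
    apply/existsP; apply: contraNT v0 => /existsPn v_eq0.
    by apply/eqP/rowP => k; rewrite mxE; apply/eqP/negPn.
  have pow_inj : injective (fun k : 'I_n => p ^ k)%N.
    by move=> i j /(expnI p_gt1) /val_inj.
  apply: contra_neq vk0 => /(congr1 (coefp (p ^ k))) /=.
  by rewrite coef_sum_monomials // coef0 => /eqP; rewrite intr_eq0 => /eqP.
have q_root i : root q (c i)%:~R.
  have vMi : \sum_(k < n) v 0 k * c i ^+ (p ^ k) = 0.
    transitivity ((v *m Mfrob p c) 0 i); last by rewrite vM0 mxE.
    by rewrite mxE; apply: eq_bigr => k _; rewrite mxE.
  apply/eqP; rewrite -(mulr0z 1) -vMi rmorph_sum horner_sum.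
  by apply: eq_bigr => k _; rewrite hornerZ hornerXn rmorphM rmorphXn.
pose rs := [seq (c i)%:~R : realalg | i <- enum 'I_n].
have rs_uniq : uniq rs.
  by rewrite map_inj_uniq ?enum_uniq // => i j /intr_inj /c_inj.
have rs_pos : all (> 0) rs by apply/allP => _ /mapP[i _ ->]; rewrite ltr0z.
have rs_roots : all (root q) rs by apply/allP => _ /mapP[i _ ->].
have := descartes_bound q0 rs_uniq rs_pos rs_roots.
rewrite size_map size_enum_ord ltnNge.
by rewrite (count_nzcoef_sum_monomials (fun k => (v 0 k)%:~R) (expn p)).
Qed.

Lemma expr_odd_sg_norm (R : realDomainType) (x : R) e :
  odd e -> x ^+ e = Num.sg x * `|x| ^+ e.
Proof.
move=> e_odd; have [->|x0] := eqVneq x 0.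
  by rewrite sgr0 mul0r expr0n; case: e e_odd.
by rewrite {1}[x]numEsg exprMn sgr_odd // e_odd expr1.
Qed.

Lemma Mfrob_odd (p n : nat) (c : 'I_n -> int) : odd p ->
  Mfrob p c = Mfrob p (fun i => `|c i|) *m diag_mx (\row_i Num.sg (c i)).
Proof.
move=> p_odd; apply/matrixP => k i; rewrite mul_mx_diag !mxE mulrC.
by apply: expr_odd_sg_norm; rewrite oddX p_odd orbT.
Qed.

Lemma Mfrob_det_neq0_odd (p n : nat) (c : 'I_n -> int) :
  (1 < p)%N -> odd p -> (forall i, c i != 0) -> injective (fun i => `|c i|) ->
  \det (Mfrob p c) != 0.
Proof.
move=> p_gt1 p_odd c0 norm_c_inj; rewrite Mfrob_odd // det_mulmx det_diag.
rewrite mulf_neq0 //; first by apply: Mfrob_det_neq0_pos => // i; rewrite normr_gt0.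
by apply/prodf_neq0 => i _; rewrite mxE sgr_eq0.
Qed.

Lemma norm_inj (R : realDomainType) (I : eqType) (f : I -> R) :
  injective f -> (forall i j, i != j -> f i != - f j) ->
  injective (fun i => `|f i|).
Proof.
move=> f_inj f_nopp i j /eqP; rewrite eqr_norm2 => /orP[/eqP/f_inj //|fij].
by have [//|ij] := eqVneq i j; rewrite (negPf (f_nopp _ _ ij)) in fij.
Qed.

Lemma det_neq0_cols_Z_indep n (A : 'M[int]_n) : \det A != 0 -> cols_Z_indep A.
Proof.
move=> detA0 a Aa0; apply/eqP; apply: contraNT detA0 => a0.
rewrite -det_tr; apply/det0P; exists a^T; first by rewrite trmx_eq0.
by rewrite -trmx_mul Aa0 trmx0.
Qed.

Theorem lemma4p1 (p n : nat) (c : 'I_n -> int)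
  (hp : prime p)
  (hnz : forall i, c i != 0)
  (hdist : injective c)
  (hcase : (forall i, 0 < c i) \/
           (p != 2%N /\ forall i j, i != j -> c i != - c j)) :
  cols_Z_indep (Mfrob p c).
Proof.
apply: det_neq0_cols_Z_indep; have p_gt1 := prime_gt1 hp.
case: hcase => [c_pos|[p_neq2 c_nopp]]; first exact: Mfrob_det_neq0_pos.
apply: Mfrob_det_neq0_odd => //; last exact: norm_inj.
by case/even_prime: hp => [p2|//]; rewrite p2 in p_neq2.
Qed.
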